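(* Fix a constant $0<\alpha<1$. For integers $1\le D\le \alpha n$, the number of pairwise non-isomorphic graphs in the class $\mathcal{L}(n,D)$ of lollipops is at least $$\frac{\big((\lceil n(1-\alpha)\rceil-1)!\big)^{\lceil n(1-\alpha)\rceil}}{\lceil n(1-\alpha)\rceil!}.$$
   Context: Port-labeled graphs: finite simple undirected connected graphs without node labels, where at each node of degree $d$ the incident edges carry distinct port numbers $0,\dots,d-1$; isomorphism is a bijection of nodes preserving edges and port numbers at both endpoints. A lollipop in $\mathcal{L}(n,D)$ has $n$ nodes partitioned into the candy $\{w_1,\dots,w_{n-D}\}$ and the stick $\{s_1,\dots,s_D\}$. The candy nodes form a clique whose edges receive port numbers from $\{0,\dots,n-D-2\}$ at each candy node in an arbitrary way (each candy node using each of these ports exactly once). The stick is the path $s_1,\dots,s_D$ where edge $\{s_j,s_{j+1}\}$ has port $0$ at $s_j$ and port $1$ at $s_{j+1}$; write $u=s_1$ and $v=s_D$ ($u=v$ if $D=1$). Node $v$ is joined to every candy node $w_i$; at each $w_i$ this edge has port $n-D-1$; at $v$ it has port $0$ if $i=1$, and for $i>1$ port $i$ if $u\ne v$ and port $i-1$ if $u=v$. The class $\mathcal{L}(n,D)$ consists of all lollipops obtained by all choices of the port numbering inside the candy. *)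

From HB Require Import structures.
From mathcomp Require Import all_boot all_order all_algebra all_fingroup.
From mathcomp Require Import reals.
Set Implicit Arguments. Unset Strict Implicit. Unset Printing Implicit Defensive.
Import Order.TTheory GRing.Theory Num.Theory.

(* A port-labeled graph on the node set 'I_n is given by an adjacency relation
   [adj] and a port function [port x y] = port number at x of the edge {x,y}
   (meaningful only when [adj x y]). *)

Definition pl_iso n (adj1 : rel 'I_n) (port1 : 'I_n -> 'I_n -> nat)
                    (adj2 : rel 'I_n) (port2 : 'I_n -> 'I_n -> nat) : Prop :=
  exists f : {perm 'I_n},
    (forall x y, adj2 (f x) (f y) = adj1 x y) /\
    (forall x y, adj1 x y -> port2 (f x) (f y) = port1 x y).

(* Lollipops in L(n,D).  Let c := n - D.  Candy node w_i (1 <= i <= c) is the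
   node i-1; stick node s_j (1 <= j <= D) is the node c + j - 1.  Hence
   u = s_1 = node c and v = s_D = node n-1. *)
Section Lollipop.
Variables n D : nat.
Local Notation c := (n - D).

Definition candy (x : 'I_n) : bool := x < c.

Definition lolli_adj : rel 'I_n := fun x y =>
  [|| [&& candy x, candy y & x != y],
      [&& c <= x, c <= y & ((x == y.+1 :> nat) || (y == x.+1 :> nat))],
      (candy x && (y == n.-1 :> nat))
    | ((x == n.-1 :> nat) && candy y)].

Definition lolli_port (cp : 'I_n -> 'I_n -> nat) (x y : 'I_n) : nat :=
  if candy x && candy y then cp x y
  else if candy x && (y == n.-1 :> nat) then c.-1
  else if (x == n.-1 :> nat) && candy y then
    (if y == 0 :> nat then 0 else if 1 < D then y.+1 else (y : nat))
  else if y == x.+1 :> nat then 0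
  else if x == y.+1 :> nat then 1
  else 0.

Definition candy_numbering (cp : 'I_n -> 'I_n -> nat) : Prop :=
  forall x : 'I_n, candy x ->
    (forall y : 'I_n, candy y -> y != x -> cp x y < c.-1) /\
    (forall q, q < c.-1 ->
       #|[set y : 'I_n | [&& candy y, y != x & cp x y == q]]| = 1).

End Lollipop.
Arguments candy : clear implicits.
Arguments lolli_adj : clear implicits.
Arguments lolli_port : clear implicits.
Arguments candy_numbering : clear implicits.

From HB Require Import structures.
From mathcomp Require Import all_boot all_order all_algebra all_fingroup.
From mathcomp Require Import reals.
From mathcomp Require Import zify.
Import Order.TTheory GRing.Theory Num.Theory.
Set Implicit Arguments. Unset Strict Implicit. Unset Printing Implicit Defensive.

(* With c := n - D candy nodes, a candy numbering amounts to choosing, for each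
   candy node, a bijection from the c - 1 other candy nodes onto the ports
   0, ..., c - 2; this gives ((c-1)!)^c numberings, and c >= k.  For c <= 2
   there is a single numbering; for c >= 3 distinct numberings give non-isomorphic lollipops: v is the only node with
   an edge carrying port 0 at itself and port c - 1 at the other end, so every
   isomorphism fixes v; the ports at v towards the candy are pairwise distinct,
   so it fixes the candy pointwise, and then preserving the candy ports forces
   the two numberings to coincide. *)

Lemma bump_ltn c i j : i < c -> j < c.-1 -> bump i j < c.
Proof. rewrite /bump; case: leqP => /=; lia. Qed.

Lemma unbump_ltn c i j : i < c -> j < c -> j != i -> unbump i j < c.-1.
Proof. rewrite /unbump; case: ltnP => /=; lia. Qed.

(* The other candy nodes of [i] are enumerated by [bump i : 'I_c.-1 -> nat],
   and the edge from [i] to [bump i j] gets port [p i j]. *)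
Definition perm_ports c (p : {ffun 'I_c -> {perm 'I_c.-1}}) (x y : nat) : nat :=
  match insub x : option 'I_c, insub (unbump x y) : option 'I_c.-1 with
  | Some i, Some j => val (p i j)
  | _, _ => 0
  end.

Lemma perm_ports_bump c p (i : 'I_c) (j : 'I_c.-1) :
  perm_ports p i (bump i j) = val (p i j).
Proof. by rewrite /perm_ports valK bumpK valK. Qed.

Lemma perm_portsE c p x y (hx : x < c) (hy : y < c) (hyx : y != x) :
  perm_ports p x y = val (p (Ordinal hx) (Ordinal (unbump_ltn hx hy hyx))).
Proof.
rewrite /perm_ports insubT /=; case: insubP => [j _ hj|/negP[]].
  by do 2 f_equal; apply: val_inj.
exact: unbump_ltn.
Qed.

Section PermPorts.
Variables n D : nat.
Local Notation c := (n - D).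

Definition lolli_perm_ports (p : {ffun 'I_c -> {perm 'I_c.-1}}) (x y : 'I_n) :=
  perm_ports p x y.

Lemma lolli_perm_ports_numbering p : candy_numbering n D (lolli_perm_ports p).
Proof.
move=> x hx; split=> [y hy hyx|q hq].
  by rewrite /lolli_perm_ports perm_portsE // ltn_ord.
pose j0 := ((p (Ordinal hx))^-1)%g (Ordinal hq).
have hj0c : bump x j0 < c := bump_ltn hx (ltn_ord j0).
have hj0n : bump x j0 < n by apply: leq_trans hj0c (leq_subr D n).
suff -> : [set y : 'I_n | [&& candy n D y, y != x & lolli_perm_ports p x y == q]]
          = [set Ordinal hj0n] by rewrite cards1.
apply/setP => y; rewrite !inE; apply/and3P/eqP => [[hy hyx /eqP]|->].
- rewrite /lolli_perm_ports perm_portsE // => hpq.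
  have hpj : p (Ordinal hx) (Ordinal (unbump_ltn hx hy hyx)) = Ordinal hq.
    exact: val_inj.
  have /(congr1 val) /= hu : Ordinal (unbump_ltn hx hy hyx) = j0.
    by rewrite /j0 -hpj permK.
  have /negbTE x_neq_y : val y != val x by rewrite val_eqE.
  by apply: val_inj => /=; rewrite -hu unbumpKcond x_neq_y.
- split; first by [].
  + by rewrite -val_eqE /= eq_sym neq_bump.
  + by rewrite /lolli_perm_ports /= (perm_ports_bump p (Ordinal hx)) permKV.
Qed.

Lemma lolli_perm_ports_inj p p' :
  (forall x y : 'I_n, candy n D x -> candy n D y -> x != y ->
     lolli_perm_ports p x y = lolli_perm_ports p' x y) -> p = p'.
Proof.
move=> E; apply/ffunP => i; apply/permP => j; apply: val_inj.
have hj := bump_ltn (ltn_ord i) (ltn_ord j).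
have hin : i < n by apply: leq_trans (ltn_ord i) (leq_subr D n).
have hjn : bump i j < n by apply: leq_trans hj (leq_subr D n).
have := E (Ordinal hin) (Ordinal hjn) (ltn_ord i) hj.
rewrite /lolli_perm_ports /= !perm_ports_bump; apply.
by rewrite -val_eqE /= neq_bump.
Qed.

End PermPorts.

Section LollipopIsomorphism.
Variables n D : nat.
Local Notation c := (n - D).
Hypotheses (c_gt2 : 2 < c) (D_gt0 : 0 < D).

Lemma lolli_adjC x y : lolli_adj n D x y = lolli_adj n D y x.
Proof. by rewrite /lolli_adj /candy -?val_eqE /=; apply/idP/idP; lia. Qed.

Lemma lolli_port_apex_indep cp cp' (x y : 'I_n) : val x = n.-1 ->
  lolli_port n D cp x y = lolli_port n D cp' x y.
Proof.
move=> hx; rewrite /lolli_port /candy hx.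
by have /negbTE -> : ~~ (n.-1 < c) by rewrite -leqNgt; lia.
Qed.

Lemma lolli_apex_edge cp (v w : 'I_n) : val v = n.-1 -> val w = 0 ->
  [/\ lolli_adj n D v w, lolli_port n D cp v w = 0 &
      lolli_port n D cp w v = c.-1].
Proof.
move=> hv hw; rewrite /lolli_adj /lolli_port /candy -?val_eqE /= hv hw.
by split; repeat case: ifP; lia.
Qed.

Lemma lolli_apex_unique cp : candy_numbering n D cp ->
  forall z y : 'I_n, lolli_adj n D z y -> lolli_port n D cp z y = 0 ->
    lolli_port n D cp y z = c.-1 -> val z = n.-1.
Proof.
move=> Hcp z y.
have lt_cp (x x' : 'I_n) : x < c -> x' < c -> x != x' -> cp x x' < c.-1.
  by move=> hx hx' hxx'; apply: (Hcp x hx).1; rewrite // eq_sym.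
have := lt_cp y z; have := lt_cp z y; rewrite -!val_eqE.
have := ltn_ord z; have := ltn_ord y.
rewrite /lolli_adj /lolli_port /candy /= -!val_eqE /=.
by repeat case: ifP; lia.
Qed.

Lemma lolli_adj_apex_candy (v y : 'I_n) :
  val v = n.-1 -> candy n D y -> lolli_adj n D v y.
Proof. by move=> hv; rewrite /lolli_adj /candy -?val_eqE /= hv; lia. Qed.

Lemma lolli_port_apex_inj cp (v y y' : 'I_n) : val v = n.-1 ->
  lolli_adj n D v y -> lolli_adj n D v y' ->
  lolli_port n D cp v y = lolli_port n D cp v y' -> y = y'.
Proof.
move=> hv; have := ltn_ord y; have := ltn_ord y'.
rewrite /lolli_adj /lolli_port /candy -?val_eqE /= hv => hy hy' a a' e.
by apply: ord_inj; move: hy hy' a a' e; repeat case: ifP; lia.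
Qed.

Section Isomorphism.
Variables (cp1 cp2 : 'I_n -> 'I_n -> nat) (f : {perm 'I_n}).
Hypothesis cp2_numbering : candy_numbering n D cp2.
Hypothesis f_adj : forall x y, lolli_adj n D (f x) (f y) = lolli_adj n D x y.
Hypothesis f_port : forall x y, lolli_adj n D x y ->
  lolli_port n D cp2 (f x) (f y) = lolli_port n D cp1 x y.

Lemma lolli_iso_fix_apex (v : 'I_n) : val v = n.-1 -> f v = v.
Proof.
move=> hv; have n_gt0 : 0 < n by lia.
have [a p0 pc] := lolli_apex_edge cp1 hv (erefl : val (Ordinal n_gt0) = 0).
apply: val_inj; rewrite hv.
apply: (lolli_apex_unique cp2_numbering (y := f (Ordinal n_gt0))).
- by rewrite f_adj.
- by rewrite f_port.
- by rewrite f_port // lolli_adjC.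
Qed.

Lemma lolli_iso_fix_candy (y : 'I_n) : candy n D y -> f y = y.
Proof.
move=> hy; have apex_lt_n : n.-1 < n by lia.
have hv : val (Ordinal apex_lt_n) = n.-1 by [].
have fv := lolli_iso_fix_apex hv.
have a := lolli_adj_apex_candy hv hy.
apply: (lolli_port_apex_inj (cp := cp2) hv) => //.
  by rewrite -[in X in lolli_adj _ _ X _]fv f_adj.
by rewrite -[in LHS]fv f_port // (lolli_port_apex_indep _ cp1).
Qed.

Lemma lolli_iso_candy_ports (x y : 'I_n) :
  candy n D x -> candy n D y -> x != y -> cp2 x y = cp1 x y.
Proof.
move=> hx hy hxy.
have a : lolli_adj n D x y by rewrite /lolli_adj hx hy hxy.
have := f_port a; rewrite !lolli_iso_fix_candy //.
by rewrite /lolli_port hx hy.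
Qed.

End Isomorphism.
End LollipopIsomorphism.

Lemma lolli_iso_perm_ports_eq n D (p p' : {ffun 'I_(n - D) -> {perm 'I_(n - D).-1}}) :
  0 < D -> pl_iso (lolli_adj n D) (lolli_port n D (lolli_perm_ports p))
                  (lolli_adj n D) (lolli_port n D (lolli_perm_ports p')) -> p = p'.
Proof.
move=> D_gt0 [f [f_adj f_port]].
have [c_le2|c_gt2] := leqP (n - D) 2.
  have ports_le1 : (n - D).-1 <= 1 by case: (n - D) c_le2 => [|[|[|]]].
  apply/ffunP => i; apply/permP => j; move: (p i j) (p' i j) => a b.
  by apply: ord_inj; have := ltn_ord a; have := ltn_ord b; lia.
apply: lolli_perm_ports_inj => x y hx hy hxy; symmetry.
exact: (lolli_iso_candy_ports c_gt2 D_gt0 (lolli_perm_ports_numbering p')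
          f_adj f_port hx hy hxy).
Qed.

Lemma ceil_compl_le_subn (R : realType) (alpha : R) (n D : nat) :
  (alpha <= 1)%R -> (D%:R <= alpha * n%:R)%R ->
  `|Num.ceil (n%:R * (1 - alpha))%R|%N <= n - D.
Proof.
move=> alpha_le1 hD.
have D_le_n : D <= n by rewrite -(ler_nat R); apply: le_trans hD (ler_piMl _ _).
have hx : (n%:R * (1 - alpha) <= (n - D)%:R :> R)%R.
  by rewrite natrB // mulrBr mulr1 lerD2l lerN2 mulrC.
have hceil : (Num.ceil (n%:R * (1 - alpha)) <= (n - D)%:Z)%R by rewrite ceil_le_int.
have hceil0 : (0 <= Num.ceil (n%:R * (1 - alpha) : R))%R.
  by rewrite ceil_ge0 (lt_le_trans (ltrN10 R)) // mulr_ge0 // subr_ge0.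
by move: hceil hceil0; set z := Num.ceil _; lia.
Qed.

Lemma leq_fact_pred_exp k c : k <= c -> (k.-1)`! ^ k <= (c.-1)`! ^ c.
Proof.
move=> k_le_c; apply: (@leq_trans ((c.-1)`! ^ k)).
  by case: k k_le_c => // k k_le_c; rewrite leq_exp2r // leq_fact //; lia.
by rewrite leq_pexp2l // fact_gt0.
Qed.

Theorem corollary5p3 (R : realType) (alpha : R) (n D : nat) :
  (0 < alpha)%R -> (alpha < 1)%R ->
  1 <= D -> (D%:R <= alpha * n%:R)%R ->
  let k := `|Num.ceil (n%:R * (1 - alpha))%R|%N in
  exists (m : nat) (F : 'I_m -> ('I_n -> 'I_n -> nat)),
    (forall a, candy_numbering n D (F a)) /\
    (forall a b : 'I_m, a != b ->
       ~ pl_iso (lolli_adj n D) (lolli_port n D (F a))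
                (lolli_adj n D) (lolli_port n D (F b))) /\
    (k.-1)`! ^ k <= k`! * m.
Proof.
move=> _ alpha_lt1 D_gt0 hD k.
pose T := {ffun 'I_(n - D) -> {perm 'I_(n - D).-1}}.
exists #|T|, (fun a => lolli_perm_ports (enum_val a)); split; [|split].
- by move=> a; apply: lolli_perm_ports_numbering.
- move=> a b /eqP ab /(lolli_iso_perm_ports_eq D_gt0) eq_ab.
  exact/ab/enum_val_inj.
- rewrite card_ffun card_Sn !card_ord.
  apply: leq_trans (leq_pmull _ (fact_gt0 k)).
  by apply/leq_fact_pred_exp/(ceil_compl_le_subn (ltW alpha_lt1)).
Qed.
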